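(* Let $2<p<4$, $b>0$, assume (V), fix $k\in\mathbb{N}$ and $\mathbf{r}_k\in\Lambda_k$. Let $(u_1,\dots,u_{k+1})\in\mathbf{H}_k$ satisfy, for every $i=1,\dots,k+1$, $$(4-p)\int_{B_i}|u_i|^pdx<2\|u_i\|_i^2$$ and $$\|u_i\|_i^2+b\Big(\int_{B_i}|\nabla u_i|^2dx\Big)^2+b\int_{B_i}|\nabla u_i|^2dx\sum_{j\ne i}\int_{B_j}|\nabla u_j|^2dx\le\int_{B_i}|u_i|^pdx.$$ Then there exists a unique $(k+1)$-tuple $(\widehat t_1,\dots,\widehat t_{k+1})$ of positive numbers with $\widehat t_i\le1$ for all $i$ such that $(\widehat t_1u_1,\dots,\widehat t_{k+1}u_{k+1})\in N_k^-$. Moreover, $$E_b(\widehat t_1u_1,\dots,\widehat t_{k+1}u_{k+1})=\max_{0\le t_i\le1,\ i=1,\dots,k+1}E_b(t_1u_1,\dots,t_{k+1}u_{k+1}).$$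
   Context: Condition (V): $V$ is continuous, radial, and $\inf_{\mathbb{R}^3}V=V_0>0$. $\Lambda_k:=\{(r_1,\dots,r_k):0=:r_0<r_1<\dots<r_k<r_{k+1}:=\infty\}$; $B_i:=\{r_{i-1}<|x|<r_i\}\subset\mathbb{R}^3$. $\mathcal{H}_i$ is the space of radial $H^1_0(B_i)$ functions (extended by $0$ outside $B_i$) with norm $\|u\|_i^2=\int_{B_i}(|\nabla u|^2+V(|x|)u^2)dx$; $\mathbf{H}_k:=\mathcal{H}_1\times\dots\times\mathcal{H}_{k+1}$. $E_b(u_1,\dots,u_{k+1}):=\frac12\sum_i\|u_i\|_i^2+\frac b4\big(\sum_i\int_{B_i}|\nabla u_i|^2\big)^2-\frac1p\sum_i\int_{B_i}|u_i|^p$. $N_k^-$ is the set of $(u_1,\dots,u_{k+1})\in\mathbf{H}_k$ with, for all $i$: $u_i\ne0$, $\|u_i\|_i^2+b\big(\int_{B_i}|\nabla u_i|^2\big)^2+b\int_{B_i}|\nabla u_i|^2\sum_{j\ne i}\int_{B_j}|\nabla u_j|^2=\int_{B_i}|u_i|^p$, and $(4-p)\int_{B_i}|u_i|^p<2\|u_i\|_i^2$. *)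

From HB Require Import structures.
From mathcomp Require Import all_boot all_order all_algebra.
From mathcomp Require Import all_classical all_reals all_analysis.
Set Implicit Arguments. Unset Strict Implicit. Unset Printing Implicit Defensive.
Import Order.TTheory GRing.Theory Num.Theory.
Import numFieldNormedType.Exports.
Local Open Scope classical_set_scope.
Local Open Scope ring_scope.

Section Defs.
Variable R : realType.
Notation mu := (@lebesgue_measure R).

(* Radii r_1 < ... < r_k are r 1, ..., r k; r_0 = 0, r_{k+1} = +oo.
   Shells are indexed 0-based: shell i (0 <= i <= k) is B_{i+1}, described
   by the radial variable s = |x| : lo < s < hi. *)
Definition radii_ok (k : nat) (r : nat -> R) : Prop :=
  (0 < k)%N -> 0 < r 1%N /\ (forall j, (1 <= j)%N -> (j < k)%N -> r j < r j.+1).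

Definition lo (r : nat -> R) (i : nat) : R := if i is 0 then 0 else r i.

Definition shell (k : nat) (r : nat -> R) (i : nat) : set R :=
  [set s | lo r i < s /\ ((i < k)%N -> s < r i.+1)].

(* Radial element of H^1_0(B_i), given by its radial profile w
   (u(x) = w(|x|)) together with its (weak) derivative g
   (|grad u|(x) = |g(|x|)|); both extended by 0 outside the shell. *)
Definition radH (V : R -> R) (k : nat) (r : nat -> R) (i : nat)
    (w g : R -> R) : Prop :=
  [/\ (forall s, ~ shell k r i s -> w s = 0 /\ g s = 0),
      (forall s t, shell k r i s -> shell k r i t -> s <= t ->
         mu.-integrable `[s, t] (EFin \o g) /\
         w t - w s = Rintegral mu `[s, t] g),
      mu.-integrable (shell k r i)
        (fun s => ((g s ^+ 2 + V s * w s ^+ 2) * s ^+ 2)%:E),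
      ((0 < i)%N -> w s @[s --> (lo r i)^'+] --> 0) &
      ((i < k)%N -> w s @[s --> (r i.+1)^'-] --> 0)].

(* ||u||_i^2 = \int_{B_i} |grad u|^2 + V u^2 dx (polar coordinates) *)
Definition normsq (V : R -> R) k r i (w g : R -> R) : R :=
  4 * pi * Rintegral mu (shell k r i) (fun s => (g s ^+ 2 + V s * w s ^+ 2) * s ^+ 2).

Definition gradsq k r i (g : R -> R) : R :=
  4 * pi * Rintegral mu (shell k r i) (fun s => g s ^+ 2 * s ^+ 2).

Definition Lpp (p : R) k r i (w : R -> R) : R :=
  4 * pi * Rintegral mu (shell k r i) (fun s => (`|w s| `^ p) * s ^+ 2).

Definition Eb (V : R -> R) (b p : R) k r (w g : 'I_k.+1 -> R -> R) : R :=
  2^-1 * (\sum_(i < k.+1) normsq V k r i (w i) (g i))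
  + b / 4 * (\sum_(i < k.+1) gradsq k r i (g i)) ^+ 2
  - p^-1 * (\sum_(i < k.+1) Lpp p k r i (w i)).

Definition inNminus (V : R -> R) (b p : R) k r (w g : 'I_k.+1 -> R -> R) : Prop :=
  forall i : 'I_k.+1,
  [/\ radH V k r i (w i) (g i),
      exists s, w i s != 0,
      normsq V k r i (w i) (g i) + b * (gradsq k r i (g i)) ^+ 2
        + b * gradsq k r i (g i) * (\sum_(j < k.+1 | j != i) gradsq k r j (g j))
        = Lpp p k r i (w i) &
      (4 - p) * Lpp p k r i (w i) < 2 * normsq V k r i (w i) (g i)].

End Defs.

From HB Require Import structures.
From mathcomp Require Import all_boot all_order all_algebra.
From mathcomp Require Import all_classical all_reals all_analysis.
From mathcomp Require Import ring lra.
From mathcomp Require Import measurable_realfun.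
Set Implicit Arguments. Unset Strict Implicit. Unset Printing Implicit Defensive.
Import Order.TTheory GRing.Theory Num.Theory.
Import numFieldNormedType.Exports.
Local Open Scope classical_set_scope.
Local Open Scope ring_scope.

(* Writing s_i = t_i^2, the energy t |-> E_b(t_1 u_1, ..., t_{k+1} u_{k+1}) becomes
   F(s) = 1/2 sum a_i s_i + b/4 (sum c_i s_i)^2 - 1/p sum L_i s_i^(p/2), with
   a_i = ||u_i||_i^2, c_i = int |grad u_i|^2 and L_i = int |u_i|^p, and the Nehari
   equations of N_k^- become the stationarity equations of F.  A stationary point
   in (0,1]^(k+1) is a fixed point of a nondecreasing scalar map, so it exists by a
   sup argument.  Since 1 < p/2 < 2, s |-> s^(p/2) is uniformly convex on [0,1], and
   the two hypotheses give b c_i (sum_j c_j) < (p/2 - 1) L_i, so this convexity beats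
   the quartic term: F lies below a strictly concave quadratic around any stationary
   point, which is then the unique stationary point and the maximum of F on
   [0,1]^(k+1). *)

Section power_inequalities.
Variable R : realType.
Implicit Types x y z q : R.

Lemma MVT_closed (f df : R -> R) x y : x <= y ->
  (forall z, x <= z -> z <= y -> is_derive z 1 f (df z)) ->
  exists2 z, x <= z <= y & f y - f x = df z * (y - x).
Proof.
move=> xy fd.
have fdo z : z \in `]x, y[ -> is_derive z 1 f (df z).
  by rewrite in_itv => /andP[xz zy]; apply: fd; apply: ltW.
have fc : {within `[x, y], continuous f}.
  apply: derivable_within_continuous => z; rewrite in_itv /= => /andP[xz zy].
  by have [] := fd z xz zy.
by have [z] := MVT_segment xy fdo fc; rewrite in_itv; exists z.
Qed.

Lemma powR_sub_ge q x y : 0 < q < 1 -> 0 < y -> y <= x -> x <= 1 ->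
  q * (x - y) <= x `^ q - y `^ q.
Proof.
move=> /andP[q0 q1] y0 yx x1.
have [z /andP[yz zx] ->] := MVT_closed (f := fun z => z `^ q) yx
  (fun z yz _ => is_derive1_powR q (lt_le_trans y0 yz)).
have z0 : 0 < z := lt_le_trans y0 yz.
have z_ge1 : 1 <= z `^ (q - 1).
  rewrite -[leLHS](powRr0 z); apply: ger_powR; last by rewrite lerBlDr add0r ltW.
  by rewrite z0 (le_trans zx x1).
rewrite -mulrA; apply: ler_wpM2l; first exact: ltW.
by rewrite ler_peMl // subr_ge0.
Qed.

Lemma powR_strongly_convex q x y : 1 < q < 2 -> 0 <= x <= 1 -> 0 < y <= 1 ->
  q * (q - 1) / 2 * (x - y) ^+ 2 <= x `^ q - y `^ q - q * y `^ (q - 1) * (x - y).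
Proof.
move=> /andP[q1 q2] /andP[x0 x1] /andP[y0 y1].
have q0 : 0 < q by lra.
have q'01 : 0 < q - 1 < 1 by apply/andP; split; lra.
have yq : y * y `^ (q - 1) = y `^ q by rewrite mulr_powRB1 // ltW.
have [->|xn0] := eqVneq x 0.
  rewrite powR0 ?gt_eqF // !sub0r mulrN opprK sqrrN -[_ * _ * y]mulrA (mulrC (y `^ _)) yq.
  have y2q : y ^+ 2 <= y `^ q.
    rewrite -powR_mulrn ?(ltW y0) //; apply: ger_powR; lra.
  have : 0 <= (q - 1) * ((1 - q / 2) * y ^+ 2 + (y `^ q - y ^+ 2)).
    by apply: mulr_ge0; [lra | rewrite addr_ge0 ?mulr_ge0 ?sqr_ge0 //; lra].
  lra.
have {xn0}x0 : 0 < x by rewrite lt_def xn0.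
pose G z := z `^ q - q * (q - 1) / 2 * z ^+ 2 - (q * y `^ (q - 1) - q * (q - 1) * y) * z.
pose dG z := q * (z `^ (q - 1) - y `^ (q - 1) - (q - 1) * (z - y)).
have G_deriv z : 0 < z -> is_derive z 1 G (dG z).
  move=> z0.
  have := is_deriveB (is_deriveB (is_derive1_powR q z0)
    (is_deriveZ (q * (q - 1) / 2) (is_deriveX 2 (is_derive_id z 1))))
    (is_deriveZ (q * y `^ (q - 1) - q * (q - 1) * y) (is_derive_id z 1)).
  move=> /is_derive_eq; apply.
  by rewrite /dG /GRing.scale /= !mulr1; field.
have dG_ge0 z : y <= z -> z <= 1 -> 0 <= dG z.
  move=> yz z1; apply: mulr_ge0; first exact: ltW.
  by have := powR_sub_ge q'01 y0 yz z1; lra.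
have dG_le0 z : 0 < z -> z <= y -> dG z <= 0.
  move=> z0 zy; apply: mulr_ge0_le0; first exact: ltW.
  by have := powR_sub_ge q'01 z0 zy y1; lra.
suff : 0 <= G x - G y by rewrite /G; lra.
have [yx|xy] := leP y x.
  have [z /andP[yz zx] ->] :=
    MVT_closed (f := G) yx (fun z yz _ => G_deriv z (lt_le_trans y0 yz)).
  by apply: mulr_ge0; [apply: dG_ge0; lra | lra].
have [z /andP[xz zy] eG] :=
  MVT_closed (f := G) (ltW xy) (fun z xz _ => G_deriv z (lt_le_trans x0 xz)).
have : dG z * (y - x) <= 0 by apply: mulr_le0_ge0; [apply: dG_le0; lra | lra].
lra.
Qed.

Lemma powR_le1 x q : 0 <= x <= 1 -> 0 <= q -> x `^ q <= 1.
Proof.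
move=> /andP[x0 x1] q0; apply: le_trans (_ : _ <= 1 `^ q) _; last by rewrite powR1.
by apply: ge0_ler_powR; rewrite ?nnegrE.
Qed.

Lemma powR_sqr_half x q : 0 <= x -> x `^ q = (x ^+ 2) `^ (q / 2).
Proof. by move=> x0; rewrite -powR_mulrn // -powRrM mulrC divfK // pnatr_eq0. Qed.
End power_inequalities.

Lemma weighted_sqr_sum_le (R : realDomainType) n (c d : 'I_n -> R) :
  (forall i, 0 <= c i) ->
  (\sum_i c i * d i) ^+ 2 <= (\sum_i c i) * (\sum_i c i * d i ^+ 2).
Proof.
move=> c_ge0.
have : 0 <= \sum_i \sum_j c i * c j * (d i - d j) ^+ 2.
  by do 2!(apply: sumr_ge0 => ? _); rewrite mulr_ge0 ?sqr_ge0 ?mulr_ge0.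
suff -> : \sum_i \sum_j c i * c j * (d i - d j) ^+ 2 =
    2 * ((\sum_i c i) * (\sum_i c i * d i ^+ 2) - (\sum_i c i * d i) ^+ 2).
  by rewrite pmulr_rge0 // subr_ge0.
set S := \sum_i c i; set X := \sum_i c i * d i; set Y := \sum_i c i * d i ^+ 2.
have -> : 2 * (S * Y - X ^+ 2) = S * Y + Y * S - (X * X + X * X) by ring.
rewrite !big_distrlr /= -!big_split -sumrB; apply: eq_bigr => i _ /=.
by rewrite -!big_split -sumrB; apply: eq_bigr => j _ /=; ring.
Qed.

Lemma nondecreasing_fixed_point (R : realType) (f : R -> R) (M : R) : 0 <= M ->
  (forall x y, 0 <= x -> x <= y -> y <= M -> f x <= f y) ->
  0 <= f 0 -> f M <= M -> exists2 x, 0 <= x <= M & f x = x.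
Proof.
move=> M_ge0 f_nd f0_ge0 fM_le.
pose A := [set x | 0 <= x <= M /\ x <= f x].
have A0 : A 0 by rewrite /A /= lexx M_ge0.
have A_sup : has_sup A by split; [exists 0 | exists M => x [/andP[]]].
have /andP[s_ge0 s_leM] : 0 <= sup A <= M.
  by rewrite sup_upper_bound //= ge_sup //; [exists 0 | move=> x [/andP[]]].
have s_le_fs : sup A <= f (sup A).
  apply: ge_sup; first by exists 0.
  move=> x Ax; have [/andP[x_ge0 _] x_le_fx] := Ax.
  by apply: le_trans x_le_fx (f_nd _ _ _ _ _) => //; exact: sup_upper_bound.
have fs_leM : f (sup A) <= M by apply: le_trans fM_le; exact: f_nd.
have fs_in_A : A (f (sup A)).
  rewrite /A /=; split; last exact: f_nd.
  by rewrite fs_leM andbT; apply: le_trans f0_ge0 (f_nd _ _ _ _ _).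
exists (sup A); first by rewrite s_ge0.
by apply/eqP; rewrite eq_le s_le_fs andbT sup_upper_bound.
Qed.

Section reduced_energy.
Variables (R : realType) (n : nat) (p b : R) (a c L : 'I_n -> R).

Definition energy (s : 'I_n -> R) : R :=
  2^-1 * (\sum_i s i * a i) + b / 4 * (\sum_i s i * c i) ^+ 2
  - p^-1 * (\sum_i s i `^ (p / 2) * L i).

(* [2 * d energy / d s_i = 0]. *)
Definition stationary (s : 'I_n -> R) : Prop :=
  forall i, L i * s i `^ (p / 2 - 1) = a i + b * c i * \sum_j s j * c j.

(* Bounds the second-order behaviour of [energy] in the direction [i] around a
   stationary point: the quartic term contributes at most b/4 (sum c) c_i by
   Cauchy-Schwarz, and the convexity of s^(p/2) on [0,1] gains (p/2-1)/4 L_i. *)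
Definition curv_bound i : R := b / 4 * (\sum_j c j) * c i - (p / 2 - 1) / 4 * L i.

Hypotheses (p_gt2 : 2 < p) (p_lt4 : p < 4) (b_gt0 : 0 < b).
Hypotheses (c_ge0 : forall i, 0 <= c i) (L_ge0 : forall i, 0 <= L i).

Let half_p_bounds : 1 < p / 2 < 2.
Proof. by have := p_gt2; have := p_lt4; rewrite ltr_pdivlMr ?ltr_pdivrMr //; lra. Qed.

Lemma energy_term_le (s u : 'I_n -> R) i :
  stationary s -> 0 < s i <= 1 -> 0 <= u i <= 1 ->
  2^-1 * (u i - s i) * a i - p^-1 * (u i `^ (p / 2) - s i `^ (p / 2)) * L i <=
  - ((p / 2 - 1) / 4 * L i * (u i - s i) ^+ 2)
  - b / 2 * (\sum_j s j * c j) * (c i * (u i - s i)).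
Proof.
move=> st s01 u01.
have := powR_strongly_convex half_p_bounds u01 s01; rewrite -subr_ge0 => conv.
have ai : a i = L i * s i `^ (p / 2 - 1) - b * c i * \sum_j s j * c j by rewrite st; ring.
have Lp_ge0 : 0 <= L i / p by apply: divr_ge0; [exact: L_ge0 | have := p_gt2; lra].
rewrite -subr_ge0 ai; apply: le_trans (mulr_ge0 Lp_ge0 conv) _.
by rewrite le_eqVlt; apply/orP; left; apply/eqP; field; have := p_gt2; lra.
Qed.

Lemma energy_sub_le (s u : 'I_n -> R) :
  stationary s -> (forall i, 0 < s i <= 1) -> (forall i, 0 <= u i <= 1) ->
  energy u - energy s <= \sum_i curv_bound i * (u i - s i) ^+ 2.
Proof.
move=> st s01 u01.
set T := \sum_j s j * c j; set X := \sum_i c i * (u i - s i).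
have uT : \sum_j u j * c j = T + X.
  by rewrite /T /X -big_split; apply: eq_bigr => i _ /=; ring.
set Q := \sum_i (p / 2 - 1) / 4 * L i * (u i - s i) ^+ 2.
have terms := ler_sum (index_enum _) (P := predT)
  (fun i _ => energy_term_le st (s01 i) (u01 i)).
rewrite [in X in _ <= X]sumrB sumrN -/Q -mulr_sumr -/X in terms.
have -> : energy u - energy s = \sum_i (2^-1 * (u i - s i) * a i
    - p^-1 * (u i `^ (p / 2) - s i `^ (p / 2)) * L i) + b / 4 * ((T + X) ^+ 2 - T ^+ 2).
  have -> : \sum_i (2^-1 * (u i - s i) * a i - p^-1 * (u i `^ (p / 2) - s i `^ (p / 2)) * L i)
      = 2^-1 * (\sum_i u i * a i) - 2^-1 * (\sum_i s i * a i)
        - (p^-1 * (\sum_i u i `^ (p / 2) * L i) - p^-1 * (\sum_i s i `^ (p / 2) * L i)).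
    by rewrite !mulr_sumr -!sumrB; apply: eq_bigr => i _; ring.
  by rewrite /energy uT -/T; ring.
have -> : \sum_i curv_bound i * (u i - s i) ^+ 2
    = b / 4 * ((\sum_j c j) * \sum_i c i * (u i - s i) ^+ 2) - Q.
  by rewrite /Q /curv_bound [in RHS]mulrA [in RHS]mulr_sumr -sumrB; apply: eq_bigr => i _; ring.
have b4_ge0 : 0 <= b / 4 by apply: divr_ge0; [exact: ltW | lra].
have CS := ler_wpM2l b4_ge0 (weighted_sqr_sum_le (fun i => u i - s i) c_ge0).
have : b / 4 * ((T + X) ^+ 2 - T ^+ 2) = b / 2 * T * X + b / 4 * X ^+ 2 by field.
move: terms CS; rewrite /= -/T -/X; lra.
Qed.

Hypothesis Nminus_ineq : forall i, (4 - p) * L i < 2 * a i.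
Hypothesis Nehari_le : forall i, a i + b * c i * \sum_j c j <= L i.

Lemma a_gt0 i : 0 < a i.
Proof.
have : 0 <= (4 - p) * L i by apply: mulr_ge0; [have := p_lt4; lra | exact: L_ge0].
by have := Nminus_ineq i; lra.
Qed.

Lemma L_gt0 i : 0 < L i.
Proof.
have : 0 <= b * c i * \sum_j c j.
  by apply: mulr_ge0; [apply: mulr_ge0; [exact: ltW | exact: c_ge0] | exact: sumr_ge0].
by have := Nehari_le i; have := a_gt0 i; lra.
Qed.

Lemma curv_bound_lt0 i : curv_bound i < 0.
Proof.
rewrite /curv_bound.
have : b / 4 * (\sum_j c j) * c i = (b * c i * \sum_j c j) / 4 by field.
by have := Nehari_le i; have := Nminus_ineq i; lra.
Qed.

Lemma exists_stationary : exists2 s, stationary s & forall i, 0 < s i <= 1.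
Proof.
set S := \sum_j c j.
have S_ge0 : 0 <= S by exact: sumr_ge0.
have q1_gt0 : 0 < p / 2 - 1 by have := half_p_bounds; lra.
have e_gt0 : 0 < (p / 2 - 1)^-1 by rewrite invr_gt0.
pose h i x := ((a i + b * c i * x) / L i) `^ (p / 2 - 1)^-1.
have base_gt0 i x : 0 <= x -> 0 < (a i + b * c i * x) / L i.
  move=> x_ge0; apply: divr_gt0 (L_gt0 i).
  have : 0 <= b * c i * x by apply: mulr_ge0 => //; apply: mulr_ge0; [exact: ltW | exact: c_ge0].
  by have := a_gt0 i; lra.
have h_nd i x y : 0 <= x -> x <= y -> h i x <= h i y.
  move=> x_ge0 xy; apply: ge0_ler_powR; rewrite ?nnegrE.
  - exact: ltW.
  - exact: ltW (base_gt0 _ _ x_ge0).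
  - exact: ltW (base_gt0 _ _ (le_trans x_ge0 xy)).
  - rewrite ler_pM2r ?invr_gt0 ?L_gt0 // lerD2l ler_wpM2l //.
    by apply: mulr_ge0; [exact: ltW | exact: c_ge0].
have h_le1 i : h i S <= 1.
  apply: powR_le1; last exact: ltW.
  by rewrite ltW ?base_gt0 //= ler_pdivrMr ?L_gt0 // mul1r Nehari_le.
pose Psi x := \sum_i c i * h i x.
have [x /andP[x_ge0 x_leS] Psi_x] : exists2 x, 0 <= x <= S & Psi x = x.
  apply: nondecreasing_fixed_point S_ge0 _ _ _.
  - move=> x y x0 xy _; apply: ler_sum => i _; apply: ler_wpM2l => //; exact: h_nd.
  - by apply: sumr_ge0 => i _; rewrite mulr_ge0 ?powR_ge0.
  - by apply: ler_sum => i _; rewrite -[leRHS]mulr1 ler_wpM2l.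
exists (fun i => h i x) => i.
  rewrite (eq_bigr (fun j => c j * h j x)) -/(Psi x) ?Psi_x; last by move=> j _; rewrite mulrC.
  rewrite /h -powRrM mulVf ?gt_eqF // powRr1 ?ltW ?base_gt0 //.
  by rewrite mulrC divfK ?gt_eqF ?L_gt0.
by rewrite powR_gt0 ?base_gt0 //= (le_trans (h_nd _ _ _ x_ge0 x_leS)).
Qed.

Lemma stationary_energy_max s u : stationary s ->
  (forall i, 0 < s i <= 1) -> (forall i, 0 <= u i <= 1) -> energy u <= energy s.
Proof.
move=> st s01 u01; rewrite -subr_le0; apply: le_trans (energy_sub_le st s01 u01) _.
by apply: sumr_le0 => i _; rewrite mulr_le0_ge0 ?sqr_ge0 ?ltW ?curv_bound_lt0.
Qed.

Lemma stationary_unique s u : stationary s -> stationary u ->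
  (forall i, 0 < s i <= 1) -> (forall i, 0 < u i <= 1) -> u = s.
Proof.
move=> st_s st_u s01 u01.
have u01' i : 0 <= u i <= 1 by have /andP[/ltW -> ->] := u01 i.
have s01' i : 0 <= s i <= 1 by have /andP[/ltW -> ->] := s01 i.
pose F i := - (curv_bound i * (u i - s i) ^+ 2).
have F_ge0 i : 0 <= F i by rewrite oppr_ge0 mulr_le0_ge0 ?sqr_ge0 ?ltW ?curv_bound_lt0.
have F_sum0 : \sum_i F i = 0.
  have := energy_sub_le st_s s01 u01'; have := energy_sub_le st_u u01 s01'.
  rewrite (eq_bigr (fun i => curv_bound i * (u i - s i) ^+ 2)); last first.
    by move=> i _; rewrite -sqrrN opprB.
  have : 0 <= \sum_i F i by exact: sumr_ge0.
  rewrite sumrN; lra.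
apply/funext => i; apply/eqP; rewrite -subr_eq0 -sqrf_eq0.
have := psumr_eq0P (fun i _ => F_ge0 i) F_sum0; move=> /(_ i isT) /eqP.
by rewrite oppr_eq0 mulf_eq0 (lt_eqF (curv_bound_lt0 i)).
Qed.

Lemma Nminus_ineq_scale i x : 0 < x <= 1 ->
  (4 - p) * (x `^ (p / 2) * L i) < 2 * (x * a i).
Proof.
move=> /andP[x_gt0 x_le1].
have q1_gt0 : 0 < p / 2 - 1 by have := half_p_bounds; lra.
have y_le1 : x `^ (p / 2 - 1) <= 1 by apply: powR_le1; [rewrite ltW | exact: ltW].
rewrite -mulr_powRB1 ?ltW //; last by have := half_p_bounds; lra.
have -> : (4 - p) * (x * x `^ (p / 2 - 1) * L i) =
    x * ((4 - p) * (x `^ (p / 2 - 1) * L i)) by ring.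
rewrite [2 * _]mulrCA ltr_pM2l //; apply: le_lt_trans (Nminus_ineq i).
by rewrite ler_wpM2l ?ler_piMl ?L_ge0 //; have := p_lt4; lra.
Qed.

Lemma exists_unique_stationary_sqrt : exists th : 'I_n -> R,
  [/\ forall i, 0 < th i <= 1,
      stationary (fun i => th i ^+ 2),
      forall i, (4 - p) * ((th i ^+ 2) `^ (p / 2) * L i) < 2 * (th i ^+ 2 * a i),
      forall t, (forall i, 0 < t i <= 1) -> stationary (fun i => t i ^+ 2) -> t = th &
      forall t, (forall i, 0 <= t i <= 1) ->
        energy (fun i => t i ^+ 2) <= energy (fun i => th i ^+ 2)].
Proof.
have [s st s01] := exists_stationary.
have th_sq i : Num.sqrt (s i) ^+ 2 = s i.
  by rewrite sqr_sqrtr // ltW; have /andP[] := s01 i.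
exists (fun i => Num.sqrt (s i)).
rewrite (_ : (fun i => Num.sqrt (s i) ^+ 2) = s); last exact/funext/th_sq.
split => //.
- by move=> i; have /andP[s_gt0 s_le1] := s01 i; rewrite sqrtr_gt0 s_gt0 -sqrtr1 ler_sqrt.
- by move=> i; rewrite th_sq; apply: Nminus_ineq_scale.
- move=> t t01 st_t; have t2_01 i : 0 < t i ^+ 2 <= 1.
    by have /andP[ti_gt0 ti_le1] := t01 i; rewrite exprn_gt0 //= expr_le1 // ltW.
  rewrite -(stationary_unique st st_t s01 t2_01); apply/funext => i.
  by rewrite sqrtr_sqr gtr0_norm //; have /andP[] := t01 i.
- move=> t t01; apply: stationary_energy_max => // i.
  by have /andP[ti_ge0 ti_le1] := t01 i; rewrite exprn_ge0 //= expr_le1.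
Qed.
End reduced_energy.

Local Notation mu := (@lebesgue_measure _).

Lemma fine_scale (R : realType) (k : R) (x : \bar R) :
  0 <= k -> fine (k%:E * x)%E = k * fine x.
Proof.
have [->|k_neq0] := eqVneq k 0; first by rewrite mul0e mul0r.
move=> k_ge0; have k_gt0 : 0 < k by rewrite lt_def k_neq0.
case: x => [x| |] //=; first by rewrite gt0_muley ?lte_fin //= mulr0.
by rewrite gt0_muleNy ?lte_fin //= mulr0.
Qed.

Lemma ge0_RintegralZl (R : realType) (D : set R) (f : R -> R) (k : R) :
  measurable D -> measurable_fun D f -> (forall x, D x -> 0 <= f x) -> 0 <= k ->
  Rintegral mu D (fun x => k * f x) = k * Rintegral mu D f.
Proof.
move=> mD mf f_ge0 k_ge0; rewrite /Rintegral.
under eq_integral do rewrite EFinM.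
by rewrite ge0_integralZl ?fine_scale //; apply/measurable_EFinP.
Qed.

Section shell.
Variables (R : realType) (k : nat) (r : nat -> R) (i : nat).

Lemma shell_itv : shell k r i = [set` Interval (BRight (lo r i))
  (if (i < k)%N then BLeft (r i.+1) else +oo%O)].
Proof.
apply/seteqP; split => s /=; rewrite /shell /= in_itv /=.
  by case: ltnP => ik [lo_s s_r] /=; rewrite lo_s //= s_r.
by case: ltnP => ik /andP[lo_s s_r]; split => // _.
Qed.

Lemma measurable_shell : measurable (shell k r i).
Proof. by rewrite shell_itv; exact: measurable_itv. Qed.

Lemma measurable_fun_shell (f : R -> R) :
  (forall s t, shell k r i s -> shell k r i t -> s <= t -> measurable_fun `[s, t] f) ->
  measurable_fun (shell k r i) f.
Proof.
move=> f_loc.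
have f_piece s t : lo r i < s -> ((i < k)%N -> t < r i.+1) -> measurable_fun `[s, t] f.
  move=> lo_s t_r; have [st|ts] := leP s t; last first.
    by rewrite set_itv_ge -?ltNge //; exact: measurable_fun_set0.
  apply: (f_loc s t) => //.
  - by split=> // ik; exact: le_lt_trans st (t_r ik).
  - by split=> //; exact: lt_le_trans lo_s st.
have lo_s n : lo r i < lo r i + n.+1%:R^-1 by rewrite ltrDl invr_gt0 ltr0Sn.
rewrite shell_itv; case: ifP => ik.
  rewrite itv_open_bnd_bigcup; apply/measurable_fun_bigcup => n; first exact: measurable_itv.
  rewrite itv_bnd_open_bigcup; apply/measurable_fun_bigcup => m; first exact: measurable_itv.
  by apply: f_piece => // _; rewrite ltrBlDr ltrDl invr_gt0 ltr0Sn.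
rewrite itvoyEbigcup; apply/measurable_fun_bigcup => n; first exact: measurable_itv.
rewrite itv_bndy_bigcup_BRight; apply/measurable_fun_bigcup => m; first exact: measurable_itv.
by apply: f_piece => //; rewrite ik.
Qed.
End shell.

Lemma gradsq_ge0 (R : realType) k (r : nat -> R) i (g : R -> R) : 0 <= gradsq k r i g.
Proof.
rewrite /gradsq mulr_ge0 ?mulr_ge0 ?pi_ge0 //.
by apply: Rintegral_ge0 => x _; rewrite mulr_ge0 ?sqr_ge0.
Qed.

Lemma Lpp_ge0 (R : realType) (p : R) k (r : nat -> R) i (w : R -> R) : 0 <= Lpp p k r i w.
Proof.
rewrite /Lpp mulr_ge0 ?mulr_ge0 ?pi_ge0 //.
by apply: Rintegral_ge0 => x _; rewrite mulr_ge0 ?powR_ge0 ?sqr_ge0.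
Qed.

Lemma Lpp_gt0_neq0 (R : realType) (p : R) k (r : nat -> R) i (w : R -> R) :
  p != 0 -> 0 < Lpp p k r i w -> exists s, w s != 0.
Proof.
move=> p_neq0; apply: contraPP => /forallNP w0.
have {}w0 s : w s = 0 by apply/eqP; apply/negPn/negP; exact: w0.
rewrite /Lpp /Rintegral integral0_eq ?mulr0 ?ltxx // => x _.
by rewrite w0 normr0 powR0 // mul0r.
Qed.

Section radH_scaling.
Variables (R : realType) (V : R -> R) (k : nat) (r : nat -> R) (i : nat) (w g : R -> R).
Hypothesis wg : radH V k r i w g.

Lemma measurable_radH_deriv : measurable_fun (shell k r i) g.
Proof.
have [_ w_ftc _ _ _] := wg.
apply: measurable_fun_shell => s t s_in t_in st.
by apply/measurable_EFinP; have [/integrableP[]] := w_ftc s t s_in t_in st.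
Qed.

Lemma measurable_radH_profile : measurable_fun (shell k r i) w.
Proof.
have [_ w_ftc _ _ _] := wg.
apply: measurable_fun_shell => s t s_in t_in st.
have [g_int _] := w_ftc s t s_in t_in st.
have mP : measurable_fun `[s, t] (fun x => w s + parameterized_integral mu s x g).
  apply: measurable_funD; first exact: measurable_cst.
  apply: subspace_continuous_measurable_fun; first exact: measurable_itv.
  exact: parameterized_integral_continuous.
apply: eq_measurable_fun mP => x; rewrite inE /= in_itv /= => /andP[sx xt].
have x_in : shell k r i x.
  case: s_in t_in => lo_s _ [_ t_r]; split => [|ik]; first exact: lt_le_trans sx.
  exact: le_lt_trans xt (t_r ik).
by have [_ e] := w_ftc s x s_in x_in sx; rewrite /parameterized_integral -e; ring.
Qed.

Lemma gradsq_scale t : gradsq k r i (t *: g) = t ^+ 2 * gradsq k r i g.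
Proof.
rewrite /gradsq; under eq_Rintegral => s _ do rewrite -[(t *: g) s]/(t * g s) exprMn -mulrA.
rewrite ge0_RintegralZl ?sqr_ge0 //; first ring.
- exact: measurable_shell.
- apply: measurable_funM; apply: measurable_funX; last exact: measurable_id.
  exact: measurable_radH_deriv.
- by move=> s _; rewrite mulr_ge0 ?sqr_ge0.
Qed.

Lemma Lpp_scale p t : 0 <= t -> Lpp p k r i (t *: w) = t `^ p * Lpp p k r i w.
Proof.
move=> t_ge0; rewrite /Lpp.
under eq_Rintegral => s _ do
  rewrite -[(t *: w) s]/(t * w s) normrM ger0_norm // powRM // -mulrA.
rewrite ge0_RintegralZl ?powR_ge0 //; first ring.
- exact: measurable_shell.
- apply: measurable_funM; last exact: measurable_funX.
  apply: (measurableT_comp (measurable_powR p)).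
  apply: (measurableT_comp (@normr_measurable R _)); exact: measurable_radH_profile.
- by move=> s _; rewrite mulr_ge0 ?powR_ge0 ?sqr_ge0.
Qed.

Lemma normsq_scale t : normsq V k r i (t *: w) (t *: g) = t ^+ 2 * normsq V k r i w g.
Proof.
have [_ _ wg_int _ _] := wg.
rewrite /normsq (_ : Rintegral _ _ _ =
    Rintegral mu (shell k r i) (fun s => t ^+ 2 * ((g s ^+ 2 + V s * w s ^+ 2) * s ^+ 2))).
  by rewrite RintegralZl //; [ring | exact: measurable_shell].
by apply: eq_Rintegral => s _; rewrite -[(t *: g) s]/(t * g s) -[(t *: w) s]/(t * w s); ring.
Qed.

Lemma radH_scale t : radH V k r i (t *: w) (t *: g).
Proof.
have [w_out w_ftc wg_int w_lo w_hi] := wg.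
split.
- by move=> s /w_out[ws gs]; rewrite -[(t *: w) s]/(t * w s) -[(t *: g) s]/(t * g s) ws gs mulr0.
- move=> s u s_in u_in su; have [g_int e] := w_ftc s u s_in u_in su.
  split; last by rewrite -[(t *: w) u]/(t * w u) -[(t *: w) s]/(t * w s) -mulrBr e -RintegralZl.
  have g_intZ := integrableZl _ t g_int.
  apply: (eq_integrable _ _ _ _ (g_intZ _)) => [|x _ /=|]; try exact: measurable_itv.
  by rewrite EFinM.
- have wg_intZ := integrableZl _ (t ^+ 2) wg_int.
  apply: (eq_integrable _ _ _ _ (wg_intZ _)) => [|x _ /=|]; try exact: measurable_shell.
  rewrite -EFinM -[(t *: g) x]/(t * g x) -[(t *: w) x]/(t * w x); congr EFin; ring.
- by move=> ik; rewrite -(mulr0 t); exact: cvgMr (w_lo ik).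
- by move=> ik; rewrite -(mulr0 t); exact: cvgMr (w_hi ik).
Qed.
End radH_scaling.

Section scaled_family.
Variables (R : realType) (V : R -> R) (b p : R) (k : nat) (r : nat -> R).
Variables (w g : 'I_k.+1 -> R -> R).
Hypotheses (p_gt0 : 0 < p) (wg : forall i : 'I_k.+1, radH V k r i (w i) (g i)).

Local Notation a := (fun i : 'I_k.+1 => normsq V k r i (w i) (g i)).
Local Notation c := (fun i : 'I_k.+1 => gradsq k r i (g i)).
Local Notation L := (fun i : 'I_k.+1 => Lpp p k r i (w i)).

Lemma Eb_scale t : (forall i, 0 <= t i) ->
  Eb V b p r (fun i => t i *: w i) (fun i => t i *: g i) = energy p b a c L (fun i => t i ^+ 2).
Proof.
move=> t_ge0; rewrite /Eb /energy.
congr (_ * _ + _ * _ ^+ 2 - _ * _); apply: eq_bigr => i _.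
- exact: normsq_scale (wg i) _.
- exact: gradsq_scale (wg i) _.
- by rewrite (Lpp_scale (wg i)) // -powR_sqr_half.
Qed.

Lemma Nehari_eq_scaleP t (i : 'I_k.+1) : 0 < t i ->
  normsq V k r i (t i *: w i) (t i *: g i) + b * gradsq k r i (t i *: g i) ^+ 2
    + b * gradsq k r i (t i *: g i) * (\sum_(j < k.+1 | j != i) gradsq k r j (t j *: g j))
    = Lpp p k r i (t i *: w i) <->
  L i * (t i ^+ 2) `^ (p / 2 - 1) = a i + b * c i * \sum_j t j ^+ 2 * c j.
Proof.
move=> ti_gt0.
rewrite (normsq_scale (wg i)) (gradsq_scale (wg i)) (Lpp_scale (wg i)) ?ltW //.
rewrite powR_sqr_half ?ltW // (eq_bigr (fun j => t j ^+ 2 * c j)) => [|j _]; last first.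
  exact: gradsq_scale (wg j) _.
rewrite [in X in _ <-> X](bigD1 i) //= -mulr_powRB1 ?exprn_ge0 ?ltW ?divr_gt0 //.
have s_neq0 : t i ^+ 2 != 0 by rewrite expf_neq0 // gt_eqF.
split => [E|E]; first apply: (mulfI s_neq0).
  transitivity (t i ^+ 2 * (t i ^+ 2) `^ (p / 2 - 1) * L i); first by rewrite /=; ring.
  by rewrite -E /=; ring.
transitivity (t i ^+ 2 * (L i * (t i ^+ 2) `^ (p / 2 - 1))); last by rewrite /=; ring.
by rewrite E /=; ring.
Qed.

Lemma inNminus_scaleP t : (forall i, 0 < t i) -> (forall i, 0 < L i) ->
  inNminus V b p r (fun i => t i *: w i) (fun i => t i *: g i) <->
  stationary p b a c L (fun i => t i ^+ 2) /\
  forall i, (4 - p) * ((t i ^+ 2) `^ (p / 2) * L i) < 2 * (t i ^+ 2 * a i).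
Proof.
move=> t_gt0 L_gt0.
have NminusE (i : 'I_k.+1) :
    (4 - p) * Lpp p k r i (t i *: w i) < 2 * normsq V k r i (t i *: w i) (t i *: g i)
    = ((4 - p) * ((t i ^+ 2) `^ (p / 2) * L i) < 2 * (t i ^+ 2 * a i)).
  by rewrite (normsq_scale (wg i)) (Lpp_scale (wg i)) ?ltW // powR_sqr_half // ltW.
split => [N | [st ineq] i].
  by split => i; have [_ _ eq_i ineq_i] := N i; [apply/Nehari_eq_scaleP | rewrite -NminusE].
split; [exact: radH_scale | | exact/Nehari_eq_scaleP | by rewrite NminusE].
have [s ws] := Lpp_gt0_neq0 (lt0r_neq0 p_gt0) (L_gt0 i).
by exists s; exact: mulf_neq0 (lt0r_neq0 (t_gt0 i)) ws.
Qed.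
End scaled_family.

Theorem lemma2p3 (R : realType) (p b : R) (V : R -> R) (k : nat) (r : nat -> R)
  (w g : 'I_k.+1 -> R -> R) :
  2 < p -> p < 4 -> 0 < b ->
  {within `[0, +oo[, continuous V} ->
  0 < inf (V @` `[0, +oo[) ->
  radii_ok k r ->
  (forall i : 'I_k.+1, radH V k r i (w i) (g i)) ->
  (forall i : 'I_k.+1,
     (4 - p) * Lpp p k r i (w i) < 2 * normsq V k r i (w i) (g i)) ->
  (forall i : 'I_k.+1,
     normsq V k r i (w i) (g i) + b * (gradsq k r i (g i)) ^+ 2
       + b * gradsq k r i (g i) * (\sum_(j < k.+1 | j != i) gradsq k r j (g j))
       <= Lpp p k r i (w i)) ->
  exists th : 'I_k.+1 -> R,
    [/\ (forall i, 0 < th i <= 1),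
        inNminus V b p r (fun i => th i *: w i) (fun i => th i *: g i),
        (forall t : 'I_k.+1 -> R, (forall i, 0 < t i <= 1) ->
           inNminus V b p r (fun i => t i *: w i) (fun i => t i *: g i) ->
           t = th) &
        (forall t : 'I_k.+1 -> R, (forall i, 0 <= t i <= 1) ->
           Eb V b p r (fun i => t i *: w i) (fun i => t i *: g i)
           <= Eb V b p r (fun i => th i *: w i) (fun i => th i *: g i))].
Proof.
move=> p_gt2 p_lt4 b_gt0 _ _ _ wg Nminus Nehari.
pose a (i : 'I_k.+1) := normsq V k r i (w i) (g i).
pose c (i : 'I_k.+1) := gradsq k r i (g i).
pose L (i : 'I_k.+1) := Lpp p k r i (w i).
have c_ge0 i : 0 <= c i by exact: gradsq_ge0.
have L_ge0 i : 0 <= L i by exact: Lpp_ge0.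
have Nehari_sum i : a i + b * c i * \sum_j c j <= L i.
  by move: (Nehari i); rewrite [\sum_j c j](bigD1 i) //= mulrDr addrA expr2 mulrA.
have L_gt0 i : 0 < L i := L_gt0 p_lt4 b_gt0 c_ge0 L_ge0 Nminus Nehari_sum i.
have p_gt0 : 0 < p by lra.
have [th [th01 th_st th_ineq th_uniq th_max]] :=
  exists_unique_stationary_sqrt p_gt2 p_lt4 b_gt0 c_ge0 L_ge0 Nminus Nehari_sum.
have pos (t : 'I_k.+1 -> R) : (forall i, 0 < t i <= 1) -> forall i, 0 < t i.
  by move=> t01 i; have /andP[] := t01 i.
exists th; split => //.
- by apply/(inNminus_scaleP b p_gt0 wg (pos th th01) L_gt0).
- move=> t t01 /(inNminus_scaleP b p_gt0 wg (pos t t01) L_gt0) [st_t _].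
  exact: th_uniq.
- move=> t t01; have t_ge0 i : 0 <= t i by have /andP[] := t01 i.
  have th_ge0 i : 0 <= th i by have /andP[/ltW] := th01 i.
  by rewrite (Eb_scale b p wg t_ge0) (Eb_scale b p wg th_ge0); exact: th_max.
Qed.
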